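(* Let $X=\{x_j:j\in I\}$ with $I\subseteq\mathbb Z$ an interval of integers and $x_j<x_{j+1}$, and let parties $A,B$ have weak preference orders $\succeq_A,\succeq_B$ on $X$ with unique ideal points $\tau_A,\tau_B$. Then the parties agree on cross-side comparisons, meaning that for all positive integers $a,b$ such that the relevant policies belong to $X$, \[ R_A(a)\succeq_A L_A(b)\iff R_B(a)\succeq_B L_B(b) \quad\text{and}\quad L_A(b)\succeq_A R_A(a)\iff L_B(b)\succeq_B R_B(a), \] provided either of the following holds (where for each party $i$, $v_i:X\to\mathbb R$ is a utility function representing $\succeq_i$, i.e. $x\succeq_i y\iff v_i(x)\ge v_i(y)$): \begin{enumerate} \item[(i)] (Symmetric single-peaked utilities) for each party $i$ there is a strictly decreasing function $\phi_i:\mathbb Z_{\ge0}\to\mathbb R$ such that, if $\tau_i=x_c$, then $v_i(x_m)=\phi_i(|m-c|)$ for all $x_m\in X$; \item[(ii)] (Common utility shape) there is a function $u:\mathbb Z\to\mathbb R$ such that for each party $i$, if $\tau_i=x_c$, then $v_i(x_m)=u(m-c)$ for all $x_m\in X$. \end{enumerate}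
   Context: Ordinal displacement notation: for a party $i$ with ideal point $\tau_i=x_c$ and a positive integer $k$, $R_i(k)=x_{c+k}$ and $L_i(k)=x_{c-k}$, whenever these policies belong to $X$; i.e. $R_i(k)$ and $L_i(k)$ are the policies $k$ ordinal steps to the right and to the left of party $i$'s ideal point. *)

From Stdlib Require Import Reals ZArith Lia Lra.
Open Scope R_scope.

Definition Z_interval (I : Z -> Prop) : Prop :=
  forall i j k : Z, I i -> I k -> (i <= j <= k)%Z -> I j.

Definition increasing_on (I : Z -> Prop) (x : Z -> R) : Prop :=
  forall j : Z, I j -> I (j + 1)%Z -> x j < x (j + 1)%Z.

Definition inX (I : Z -> Prop) (x : Z -> R) (p : R) : Prop :=
  exists j, I j /\ x j = p.

(* A weak preference order (complete, transitive) on X; pref p q means p >= q. *)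
Definition weak_order_on (I : Z -> Prop) (x : Z -> R) (pref : R -> R -> Prop) : Prop :=
  (forall p q, inX I x p -> inX I x q -> pref p q \/ pref q p) /\
  (forall p q r, inX I x p -> inX I x q -> inX I x r ->
     pref p q -> pref q r -> pref p r).

Definition unique_ideal_point (I : Z -> Prop) (x : Z -> R) (pref : R -> R -> Prop)
  (c : Z) : Prop :=
  I c /\ (forall m, I m -> pref (x c) (x m)) /\
  (forall d, I d -> (forall m, I m -> pref (x d) (x m)) -> x d = x c).

Definition represents (I : Z -> Prop) (x : Z -> R) (pref : R -> R -> Prop)
  (v : R -> R) : Prop :=
  forall p q, inX I x p -> inX I x q -> (pref p q <-> v p >= v q).

(* Ordinal displacements: R_i(k) = x_{c+k}, L_i(k) = x_{c-k}. *)
Definition Rdisp (x : Z -> R) (c k : Z) : R := x (c + k)%Z.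
Definition Ldisp (x : Z -> R) (c k : Z) : R := x (c - k)%Z.

Definition strictly_decreasing_nat (phi : nat -> R) : Prop :=
  forall n m : nat, (n < m)%nat -> phi m < phi n.

Definition cond_symmetric (I : Z -> Prop) (x : Z -> R)
  (prefA prefB : R -> R -> Prop) (cA cB : Z) : Prop :=
  exists (vA vB : R -> R) (phiA phiB : nat -> R),
    represents I x prefA vA /\ represents I x prefB vB /\
    strictly_decreasing_nat phiA /\ strictly_decreasing_nat phiB /\
    (forall m, I m -> vA (x m) = phiA (Z.abs_nat (m - cA))) /\
    (forall m, I m -> vB (x m) = phiB (Z.abs_nat (m - cB))).

Definition cond_common_shape (I : Z -> Prop) (x : Z -> R)
  (prefA prefB : R -> R -> Prop) (cA cB : Z) : Prop :=
  exists (vA vB : R -> R) (u : Z -> R),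
    represents I x prefA vA /\ represents I x prefB vB /\
    (forall m, I m -> vA (x m) = u (m - cA)%Z) /\
    (forall m, I m -> vB (x m) = u (m - cB)%Z).

From Stdlib Require Import Reals ZArith Lia Lra.
Open Scope R_scope.

(* Under either condition, a party with ideal point x_c ranks x_{c+d} against
   x_{c+e} by a rule that depends on the displacements d and e alone and is the
   same for both parties: |d| <= |e| under (i), u d >= u e under (ii).  Cross-side
   comparisons are the case d = a, e = -b, so the two parties agree on them. *)

Definition ranks_displacements_by (I : Z -> Prop) (x : Z -> R)
  (pref : R -> R -> Prop) (c : Z) (cmp : Z -> Z -> Prop) : Prop :=
  forall d e : Z, I (c + d)%Z -> I (c + e)%Z ->
    (pref (x (c + d)%Z) (x (c + e)%Z) <-> cmp d e).

Lemma strictly_decreasing_nat_ge {phi : nat -> R} (n m : nat) :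
  strictly_decreasing_nat phi -> (phi n >= phi m <-> (n <= m)%nat).
Proof.
  intros Hphi; split; intros Hnm.
  - destruct (le_lt_dec n m) as [|Hmn]; [assumption|].
    apply Hphi in Hmn; lra.
  - destruct (Nat.eq_dec n m) as [->|Hne]; [lra|].
    assert (Hlt : (n < m)%nat) by lia.
    apply Hphi in Hlt; lra.
Qed.

Lemma represents_index {I : Z -> Prop} {x : Z -> R} {pref : R -> R -> Prop}
  {v : R -> R} {j k : Z} :
  represents I x pref v -> I j -> I k ->
  (pref (x j) (x k) <-> v (x j) >= v (x k)).
Proof. intros Hv Hj Hk; apply Hv; [exists j | exists k]; auto. Qed.

Lemma symmetric_ranks_by_distance {I : Z -> Prop} {x : Z -> R}
  {pref : R -> R -> Prop} {v : R -> R} {phi : nat -> R} {c : Z} :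
  represents I x pref v -> strictly_decreasing_nat phi ->
  (forall m, I m -> v (x m) = phi (Z.abs_nat (m - c))) ->
  ranks_displacements_by I x pref c (fun d e => (Z.abs_nat d <= Z.abs_nat e)%nat).
Proof.
  intros Hv Hphi Hshape d e Hd He.
  rewrite (represents_index Hv Hd He), (Hshape _ Hd), (Hshape _ He), !Z.add_simpl_l.
  exact (strictly_decreasing_nat_ge _ _ Hphi).
Qed.

Lemma common_shape_ranks_by_shape {I : Z -> Prop} {x : Z -> R}
  {pref : R -> R -> Prop} {v : R -> R} {u : Z -> R} {c : Z} :
  represents I x pref v ->
  (forall m, I m -> v (x m) = u (m - c)%Z) ->
  ranks_displacements_by I x pref c (fun d e => u d >= u e).
Proof.
  intros Hv Hshape d e Hd He.
  rewrite (represents_index Hv Hd He), (Hshape _ Hd), (Hshape _ He), !Z.add_simpl_l.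
  reflexivity.
Qed.

Lemma common_displacement_ranking {I : Z -> Prop} {x : Z -> R}
  {prefA prefB : R -> R -> Prop} {cA cB : Z} :
  cond_symmetric I x prefA prefB cA cB \/ cond_common_shape I x prefA prefB cA cB ->
  exists cmp : Z -> Z -> Prop,
    ranks_displacements_by I x prefA cA cmp /\ ranks_displacements_by I x prefB cB cmp.
Proof.
  intros [[vA [vB [phiA [phiB [HvA [HvB [HphiA [HphiB [HA HB]]]]]]]]]
         | [vA [vB [u [HvA [HvB [HA HB]]]]]]].
  - exists (fun d e => (Z.abs_nat d <= Z.abs_nat e)%nat); split.
    + exact (symmetric_ranks_by_distance HvA HphiA HA).
    + exact (symmetric_ranks_by_distance HvB HphiB HB).
  - exists (fun d e => u d >= u e); split.
    + exact (common_shape_ranks_by_shape HvA HA).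
    + exact (common_shape_ranks_by_shape HvB HB).
Qed.

Theorem proposition3 (I : Z -> Prop) (x : Z -> R)
  (prefA prefB : R -> R -> Prop) (cA cB : Z) :
  Z_interval I ->
  increasing_on I x ->
  weak_order_on I x prefA ->
  weak_order_on I x prefB ->
  unique_ideal_point I x prefA cA ->
  unique_ideal_point I x prefB cB ->
  (cond_symmetric I x prefA prefB cA cB \/ cond_common_shape I x prefA prefB cA cB) ->
  forall a b : Z, (0 < a)%Z -> (0 < b)%Z ->
    I (cA + a)%Z -> I (cA - b)%Z -> I (cB + a)%Z -> I (cB - b)%Z ->
    (prefA (Rdisp x cA a) (Ldisp x cA b) <-> prefB (Rdisp x cB a) (Ldisp x cB b)) /\
    (prefA (Ldisp x cA b) (Rdisp x cA a) <-> prefB (Ldisp x cB b) (Rdisp x cB a)).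
Proof.
  intros _ _ _ _ _ _ Hcond a b _ _ HAr HAl HBr HBl.
  destruct (common_displacement_ranking Hcond) as [cmp [HA HB]].
  (* [Ldisp x c b] is [x (c - b)], i.e. [x (c + - b)] by conversion. *)
  unfold Rdisp, Ldisp; split.
  - rewrite (HA a (- b)%Z HAr HAl), (HB a (- b)%Z HBr HBl); reflexivity.
  - rewrite (HA (- b)%Z a HAl HAr), (HB (- b)%Z a HBl HBr); reflexivity.
Qed.
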